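(* Let $1<n\leq m$ and let $v\in Z_{n,m}$ with $h(v)\geq h_{n,m}$ and $\sum_{i\in I_c(v)}v_i=n$. Then $d(v,0)\leq D_{n,m}$.
   Context: Elements of $\mathbb{Z}_n$ are identified with representatives in $\{0,\dots,n-1\}$ (so $v_0,v_{m+1}$ are such integers in sums). $Z_{n,m}$ has vertices $u=(u_0,\dots,u_{m+1})\in\mathbb{Z}_n\times\{-1,0,1\}^m\times\mathbb{Z}_n$ with $\sum u_i\equiv0\pmod n$; $u,v$ adjacent if there is $0\leq i\leq m$ with $u_j=v_j$ for $j\notin\{i,i+1\}$ and either ($u_i=v_i+1$, $u_{i+1}=v_{i+1}-1$) or ($u_i=v_i-1$, $u_{i+1}=v_{i+1}+1$), arithmetic in coordinates $0,m+1$ in $\mathbb{Z}_n$. $d$ is graph distance, $0$ the all-zero vertex. $\operatorname{Piv}(v)$ is the set of $-1\le p\le m+1$ with $n\mid\sum_{i=0}^pv_i$. $p_l(v)=\max\{p\in\operatorname{Piv}(v):p<\frac m2\}$, $p_r(v)=\min\{p\in\operatorname{Piv}(v):p\ge\frac m2\}$, $I_c(v)=\{p_l(v)+1,\dots,p_r(v)\}$, $h(v)=\min\{|p-\frac m2|:p\in\operatorname{Piv}(v)\}$, $h_{n,m}=\frac n2$ if $2\mid(m-n)$ and $\frac{n+1}2$ otherwise. $u^{(0)}$: $u_i=1$ ($1\le i\le m$), $u_0\equiv-\lfloor\frac{m-n}2\rfloor\pmod n$; for $n<m$, $m-n$ odd, $u^{(1)}$: $u_{\lceil(m+1)/2\rceil}=0$,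 other $u_i=1$ ($1\le i\le m$), $u_0\equiv-\lfloor\frac{m-n}2\rfloor\pmod n$. $D_{n,m}=d(u^{(0)},0)$ if $2\mid(m-n)$, else $\max\{d(u^{(0)},0),d(u^{(1)},0)\}$. *)

From HB Require Import structures.
From mathcomp Require Import all_boot all_order all_algebra.
From Stdlib Require Import ClassicalEpsilon.
Set Implicit Arguments. Unset Strict Implicit. Unset Printing Implicit Defensive.
Import Order.TTheory GRing.Theory Num.Theory.
Local Open Scope ring_scope.

(* A vertex u = (u_0,...,u_{m+1}) of Z_{n,m} is represented by a sequence of
   integers of length m+2; u_0 and u_{m+1} are the representatives in
   {0,...,n-1} of elements of Z_n, u_1..u_m are in {-1,0,1}. *)
Definition coord (u : seq int) (i : nat) : int := nth 0 u i.

Definition is_vertex (n m : nat) (u : seq int) : Prop :=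
  [/\ size u = m.+2,
      0 <= coord u 0 < n%:Z,
      0 <= coord u m.+1 < n%:Z,
      (forall i : nat, (1 <= i <= m)%N -> -1 <= coord u i <= 1)
    & (n%:Z %| \sum_(i < m.+2) coord u i)%Z].

Definition coord_eq (n m : nat) (j : nat) (a b : int) : bool :=
  if (j == 0%N) || (j == m.+1) then (a == b %[mod n%:Z])%Z else a == b.

Definition adj (n m : nat) (u v : seq int) : Prop :=
  is_vertex n m u /\ is_vertex n m v /\
  exists i : nat, (i <= m)%N /\
    (forall j : nat, (j < m.+2)%N -> j <> i -> j <> i.+1 -> coord u j = coord v j) /\
    ((coord_eq n m i (coord u i) (coord v i + 1) /\
      coord_eq n m i.+1 (coord u i.+1) (coord v i.+1 - 1)) \/
     (coord_eq n m i (coord u i) (coord v i - 1) /\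
      coord_eq n m i.+1 (coord u i.+1) (coord v i.+1 + 1))).

Inductive walk (n m : nat) : nat -> seq int -> seq int -> Prop :=
  | walk0 u : is_vertex n m u -> walk n m 0 u u
  | walkS k u w v : adj n m u w -> walk n m k w v -> walk n m k.+1 u v.

(* graph distance: the least length of a walk (0 if there is none; the graph
   Z_{n,m} is connected, and the main statement also asserts reachability) *)
Definition dist (n m : nat) (u v : seq int) : nat :=
  epsilon (inhabits 0%N)
    (fun k => walk n m k u v /\ forall j, walk n m j u v -> (k <= j)%N).

Definition zero_vertex (m : nat) : seq int := nseq m.+2 0.

Definition psum (v : seq int) (k : nat) : int := \sum_(i < k) coord v i.

Definition piv (n m : nat) (v : seq int) (p : int) : bool :=
  (-1 <= p <= m.+1%:Z) && (n%:Z %| psum v (absz (p + 1)))%Z.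

(* p_l(v) = max {p in Piv(v) : p < m/2}  (p = k - 1, k < m+3) *)
Definition p_l (n m : nat) (v : seq int) : int :=
  (\max_(k < m.+3 | piv n m v (k%:Z - 1) && ((k%:Z - 1) * 2 < m%:Z)) (k : nat) : nat)%:Z - 1.

(* p_r(v) = min {p in Piv(v) : p >= m/2}  (p = k - 1, k < m+3) *)
Definition p_r (n m : nat) (v : seq int) : int :=
  (\big[minn/m.+2]_(k < m.+3 | piv n m v (k%:Z - 1) && (m%:Z <= (k%:Z - 1) * 2)) (k : nat) : nat)%:Z - 1.

Definition sum_Ic (n m : nat) (v : seq int) : int :=
  \sum_(i < m.+2 | (p_l n m v < i%:Z <= p_r n m v)) coord v i.

(* h(v) >= x, where h(v) = min {|p - m/2| : p in Piv(v)} *)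
Definition h_ge (n m : nat) (v : seq int) (x : rat) : Prop :=
  forall p : int, piv n m v p -> x <= `| p%:~R - (m%:R / 2 : rat) |.

Definition h_nm (n m : nat) : rat :=
  if ~~ odd (m - n) then n%:R / 2 else n.+1%:R / 2.

(* u^(0): u_i = 1 (1<=i<=m), u_0 = -floor((m-n)/2) mod n, u_{m+1} the
   unique value in {0..n-1} making the coordinate sum divisible by n *)
Definition u0_first (n m : nat) : int := ((- ((m - n) %/ 2)%N%:Z) %% n%:Z)%Z.

Definition u_0 (n m : nat) : seq int :=
  u0_first n m :: nseq m 1 ++ [:: ((- m%:Z - u0_first n m) %% n%:Z)%Z].

(* u^(1): as u^(0) but u_{ceil((m+1)/2)} = 0 *)
Definition u_1 (n m : nat) : seq int :=
  u0_first n m ::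
  [seq (if i == (m.+1)./2 + (odd m.+1) then 0 else 1) | i <- iota 1 m]
  ++ [:: ((- (m%:Z - 1) - u0_first n m) %% n%:Z)%Z].

Definition D_nm (n m : nat) : nat :=
  if ~~ odd (m - n) then dist n m (u_0 n m) (zero_vertex m)
  else maxn (dist n m (u_0 n m) (zero_vertex m))
            (dist n m (u_1 n m) (zero_vertex m)).

(* Write S_k = v_0 + ... + v_{k-1} for the prefix sums of a vertex v.  Along
   an edge exactly one of S_1, ..., S_{m+1} moves by 1, up to a common shift of
   all of them by a multiple of n; conversely a largest (or smallest) S_{p+1}
   can always be moved one step towards a given multiple j n.  Hence
   d(v, 0) = min_j sum_{p <= m} |S_{p+1} - j n|.
   For v as in the statement, S equals k n at K_l = p_l(v) + 1 and (k + 1) n at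
   K_r = p_r(v) + 1 and stays strictly between these values in between, while
   h(v) >= h_{n,m} forces K_l <= R + 1 and K_r > m - R, where m = 2R + n or
   m = 2R + n + 1.  Outside the window S is 1-Lipschitz, so the costs for
   j = k and j = k + 1 add up to at most G = sum_p (n + 2 dist(p, [R, m - R])).
   The prefix sums of u^(0) grow by one at each step, which gives
   G <= 2 d(u^(0), 0); one step of u^(1) is flat, which costs one unit:
   G <= 2 d(u^(1), 0) + 1.  As 2 d(v, 0) <= G and distances are integers, this
   concludes. *)

From Pilot Require Import Defs.
From HB Require Import structures.
From mathcomp Require Import all_boot all_order all_algebra.
From mathcomp Require Import zify ring.
From Stdlib Require Import ClassicalEpsilon.
Import Order.TTheory GRing.Theory Num.Theory.
Local Open Scope ring_scope.

(* all_algebra also exports a [coord] (from vector.v) *)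
Local Notation coord := Defs.coord.

Set Implicit Arguments.
Unset Strict Implicit.

Lemma modz_decomp (x : int) (n : nat) : (0 < n)%N ->
  exists q : int, (x %% n%:Z)%Z = x - q * n%:Z /\ 0 <= (x %% n%:Z)%Z < n%:Z.
Proof.
move=> hn; exists (x %/ n%:Z)%Z; split; last by rewrite modz_ge0 ?ltz_pmod //; lia.
by rewrite {2}(divz_eq x n%:Z) addrC addKr.
Qed.

Lemma dvdz_small (n : nat) (x : int) : 0 <= x < n%:Z -> (n%:Z %| x)%Z -> x = 0.
Proof. by move=> hx /dvdz_mod0P; rewrite modz_small. Qed.

Lemma mulz_le0_or_ge (t : int) (n : nat) : t * n%:Z <= 0 \/ n%:Z <= t * n%:Z.
Proof. by case: (lerP t 0) => h; [left | right]; nia. Qed.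

Lemma psumS (v : seq int) k : psum v k.+1 = psum v k + coord v k.
Proof. by rewrite /psum big_ord_recr. Qed.

Lemma psum0 (v : seq int) : psum v 0 = 0.
Proof. by rewrite /psum big_ord0. Qed.

Lemma psum_zero_vertex m k : psum (zero_vertex m) k = 0.
Proof.
by rewrite /psum big1 // => i _; rewrite /Defs.coord nth_nseq if_same.
Qed.

Lemma sum_psum (v : seq int) a b : (a <= b)%N ->
  \sum_(a <= i < b) coord v i = psum v b - psum v a.
Proof.
move=> hab; rewrite /psum -!(big_mkord xpredT (coord v)).
by rewrite (big_cat_nat (leq0n a) hab) /= addrC addrK.
Qed.

Lemma sum_indicator_ord (m p : nat) : (p <= m)%N ->
  \sum_(q < m.+1) ((q : nat) == p)%:Z = 1.
Proof.
move=> hp; rewrite (bigD1 (Ordinal (hp : p < m.+1)%N)) //= eqxx big1 ?addr0 //.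
by move=> q /negbTE; rewrite -val_eqE /= => ->.
Qed.

Lemma double_sum_rev m (F : nat -> int) :
  2 * \sum_(p < m.+1) F p = \sum_(p < m.+1) (F p + F (m - p)%N).
Proof.
rewrite big_split /= mulr_natl mulr2n; congr (_ + _).
rewrite (reindex_inj rev_ord_inj) /=; apply: eq_bigr => -[i hi] _ /=.
by rewrite subSS.
Qed.

Lemma unit_steps_lipschitz (f : nat -> int) (a b : nat) : (a <= b)%N ->
  (forall i, (a <= i < b)%N -> `|f i.+1 - f i| <= 1) ->
  `|f b - f a| <= (b - a)%N%:Z.
Proof.
elim: b => [|b IH] hab hf; first by move: hab; rewrite leqn0 => /eqP ->; lia.
have [<-|hab'] := eqVneq a b.+1; first by lia.
have hab2 : (a <= b)%N by lia.
have := IH hab2 (fun i hi => hf i ltac:(lia)); have := hf b ltac:(lia); lia.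
Qed.

Lemma unit_steps_ivt (f : nat -> int) (a b : nat) (t : int) : (a <= b)%N ->
  (forall i, (a <= i < b)%N -> f i.+1 <= f i + 1) ->
  f a <= t -> t <= f b -> exists2 i, (a <= i <= b)%N & f i = t.
Proof.
elim: b => [|b IH] hab hf hat htb.
  by move: hab hat; rewrite leqn0 => /eqP -> hat; exists 0%N; lia.
have [eab|hab'] := eqVneq a b.+1; first by subst a; exists b.+1; lia.
have hab2 : (a <= b)%N by lia.
have [htb'|htb'] := lerP t (f b).
  by have [i hi <-] := IH hab2 (fun i hi => hf i ltac:(lia)) hat htb'; exists i; lia.
by exists b.+1; have := hf b ltac:(lia); lia.
Qed.

(** * Vertices and edges *)

Lemma vertex_coord_mid n m v i :
  is_vertex n m v -> (0 < i <= m)%N -> -1 <= coord v i <= 1.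
Proof. by case=> _ _ _ hmid _ /hmid. Qed.

Lemma vertex_psum_step n m v i :
  is_vertex n m v -> (0 < i <= m)%N -> `|psum v i.+1 - psum v i| <= 1.
Proof. by move=> hv /(vertex_coord_mid hv); rewrite psumS; lia. Qed.

Lemma psum_lipschitz n m v (a b : nat) : is_vertex n m v ->
  (0 < a)%N -> (a <= b)%N -> (b <= m.+1)%N -> `|psum v b - psum v a| <= (b - a)%N%:Z.
Proof.
move=> hv ha hab hb; apply: unit_steps_lipschitz => // i hi.
by apply: (vertex_psum_step hv); lia.
Qed.

Lemma vertex_zero n m : (0 < n)%N -> is_vertex n m (zero_vertex m).
Proof.
move=> hn; split.
- by rewrite size_nseq.
- by rewrite /Defs.coord nth_nseq /=; lia.
- by rewrite /Defs.coord nth_nseq ltnSn; lia.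
- by move=> i _; rewrite /Defs.coord nth_nseq if_same.
- by rewrite -/(psum _ m.+2) psum_zero_vertex dvdz0.
Qed.

Lemma coord_eqP n m j a b : coord_eq n m j a b <->
  exists2 J : int, a = b + J * n%:Z & [|| j == 0%N, j == m.+1 | J == 0].
Proof.
rewrite /coord_eq; case: ifP => hj /=; split.
- by rewrite eqz_mod_dvd => /dvdzP [J hJ]; exists J; rewrite ?orbA ?hj; lia.
- by case=> J -> _; rewrite eqz_mod_dvd; apply/dvdzP; exists J; lia.
- by move=> /eqP ->; exists 0; lia.
- by case=> J ->; rewrite orbA hj => /eqP ->; rewrite mul0r addr0.
Qed.

Definition transfer n m (u w : seq int) (i : nat) (s : int) : Prop :=
  [/\ forall q, (q < m.+2)%N -> q <> i -> q <> i.+1 -> coord u q = coord w q,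
      coord_eq n m i (coord u i) (coord w i + s)
    & coord_eq n m i.+1 (coord u i.+1) (coord w i.+1 - s)].

Lemma adjP n m u w : adj n m u w <->
  [/\ is_vertex n m u, is_vertex n m w &
      exists i s, [/\ (i <= m)%N, s = 1 \/ s = -1 & transfer n m u w i s]].
Proof.
split.
- case=> hu [hw [i [hi [heq [[h1 h2]|[h1 h2]]]]]]; split=> //.
    by exists i, 1; split=> //; left.
  by exists i, (-1); split=> //; right.
- case=> hu hw [i [s [hi [-> | ->] [heq h1 h2]]]]; split=> //; split=> //.
    by exists i; split=> //; split=> //; left.
  by exists i; split=> //; split=> //; right; move: h2; rewrite opprK.
Qed.

Lemma psum_update2 (u w : seq int) i K :
  (forall q, (q < K)%N -> q <> i -> q <> i.+1 -> coord u q = coord w q) ->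
  forall k, (k <= K)%N ->
  psum u k = psum w k + (i < k)%N%:Z * (coord u i - coord w i)
                      + (i.+1 < k)%N%:Z * (coord u i.+1 - coord w i.+1).
Proof.
move=> heq; elim=> [|k IH] hk; first by rewrite !psum0; lia.
rewrite !psumS IH ?(ltnW hk) //.
have [-> | ki] := eqVneq k i; first by lia.
have [-> | ki1] := eqVneq k i.+1; first by lia.
by rewrite (heq k) //; [lia | exact/eqP | exact/eqP].
Qed.

Lemma transfer_psum n m u w i s : (i <= m)%N -> transfer n m u w i s ->
  exists J : int, forall p, (p <= m)%N ->
    psum u p.+1 = psum w p.+1 + s * (p == i)%:Z + J * n%:Z.
Proof.
move=> hi [heq /coord_eqP [J hJ hJ0] /coord_eqP [J' hJ' hJ'0]].
exists J => p hp; have hk : (p.+1 <= m.+2)%N by lia.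
by rewrite (psum_update2 heq hk); lia.
Qed.

Lemma transfer_dvd_total n m u w i s : (i <= m)%N -> transfer n m u w i s ->
  (n%:Z %| psum u m.+2)%Z = (n%:Z %| psum w m.+2)%Z.
Proof.
move=> hi [heq /coord_eqP [J hJ _] /coord_eqP [J' hJ' _]].
have -> : psum u m.+2 = psum w m.+2 + (J + J') * n%:Z.
  by rewrite (psum_update2 heq (leqnn _)) hJ hJ'; lia.
by rewrite rpredDr // dvdz_mull.
Qed.

Definition ends_mod n m (j : nat) (x : int) : int :=
  if (j == 0%N) || (j == m.+1) then (x %% n%:Z)%Z else x.

Lemma ends_modE n m j x : exists2 J : int,
  ends_mod n m j x = x + J * n%:Z & [|| j == 0%N, j == m.+1 | J == 0].
Proof.
rewrite /ends_mod; case: ifP => hj; last by exists 0; rewrite ?addr0 ?eqxx ?orbT.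
exists (- (x %/ n%:Z)%Z); last by rewrite orbA hj.
by rewrite {2}(divz_eq x n%:Z) mulNr addrAC subrr add0r.
Qed.

Lemma ends_mod_range n m j x : (0 < n)%N -> (j == 0%N) || (j == m.+1) ->
  0 <= ends_mod n m j x < n%:Z.
Proof.
by move=> hn hj; rewrite /ends_mod hj modz_ge0 ?ltz_pmod //; lia.
Qed.

Lemma ends_mod_mid n m j x : (0 < j <= m)%N -> ends_mod n m j x = x.
Proof. by move=> hj; rewrite /ends_mod ifF //; lia. Qed.

Definition move_unit n m (v : seq int) (p : nat) (s : int) : seq int :=
  set_nth 0 (set_nth 0 v p (ends_mod n m p (coord v p - s)))
          p.+1 (ends_mod n m p.+1 (coord v p.+1 + s)).

Lemma coord_move_unit n m v p s q : coord (move_unit n m v p s) q =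
  if q == p.+1 then ends_mod n m p.+1 (coord v p.+1 + s)
  else if q == p then ends_mod n m p (coord v p - s) else coord v q.
Proof. by rewrite [LHS]/Defs.coord nth_set_nth /= nth_set_nth. Qed.

Lemma transfer_move_unit n m v p s : transfer n m v (move_unit n m v p s) p s.
Proof.
split.
- move=> q _ /eqP/negbTE hq /eqP/negbTE hq1.
  by rewrite coord_move_unit hq hq1.
- rewrite coord_move_unit (ltn_eqF (ltnSn p)) eqxx.
  have [J -> hJ] := ends_modE n m p (coord v p - s).
  by apply/coord_eqP; exists (- J); [rewrite mulNr; ring | move: hJ; rewrite oppr_eq0].
- rewrite coord_move_unit eqxx.
  have [J -> hJ] := ends_modE n m p.+1 (coord v p.+1 + s).
  by apply/coord_eqP; exists (- J); [rewrite mulNr; ring | move: hJ; rewrite oppr_eq0].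
Qed.

Lemma vertex_move_unit n m v p s : (1 < n)%N -> is_vertex n m v ->
  (p <= m)%N -> s = 1 \/ s = -1 ->
  ((0 < p)%N -> 0 <= s * coord v p) -> ((p < m)%N -> s * coord v p.+1 <= 0) ->
  is_vertex n m (move_unit n m v p s).
Proof.
move=> hn hv hp hs hsp hsp1; have [hsz h0 hm1 hmid hdiv] := hv.
have hn0 : (0 < n)%N by lia.
split.
- by rewrite !size_set_nth hsz; lia.
- rewrite coord_move_unit; case: eqP => // _.
  by case: eqP => [<- | _] //; apply: ends_mod_range.
- rewrite coord_move_unit eqSS.
  case: eqP => [<- | hpm]; first by apply: ends_mod_range; rewrite ?eqxx ?orbT.
  by case: eqP => [hmp | _] //; lia.
- move=> i hi; have := hmid i hi; rewrite coord_move_unit.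
  case: eqP => [ip1 | _].
    by subst i; rewrite ends_mod_mid //; have := hsp1 ltac:(lia); case: hs => ->; lia.
  case: eqP => [ip | _] //.
  by subst i; rewrite ends_mod_mid //; have := hsp ltac:(lia); case: hs => ->; lia.
- by rewrite (transfer_dvd_total hp (transfer_move_unit n m v p s)) in hdiv.
Qed.

(** * Distance to the zero vertex *)

Definition diag_cost n m (v : seq int) (j : int) : int :=
  \sum_(p < m.+1) `|psum v p.+1 - j * n%:Z|.

Definition pair_cost n m (u w : seq int) (j : int) : int :=
  \sum_(p < m.+1) `|psum u p.+1 - psum w p.+1 - j * n%:Z|.

Lemma diag_cost_ge0 n m v j : 0 <= diag_cost n m v j.
Proof. exact: sumr_ge0. Qed.

Lemma pair_cost_zero n m v j : pair_cost n m v (zero_vertex m) j = diag_cost n m v j.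
Proof. by apply: eq_bigr => p _; rewrite psum_zero_vertex subr0. Qed.

Lemma adj_pair_cost n m u w : adj n m u w -> exists j, pair_cost n m u w j <= 1.
Proof.
case/adjP=> _ _ [i [s [hi hs /(transfer_psum hi) [J hJ]]]].
exists J; rewrite -[X in _ <= X](sum_indicator_ord hi); apply: ler_sum => p _.
rewrite hJ; last by rewrite -ltnS.
rewrite addrAC addrK addrC addKr.
by case: hs => ->; rewrite ?mulN1r ?mul1r ?normrN; case: (_ == _).
Qed.

Lemma walk_pair_cost n m N u w :
  walk n m N u w -> exists j, pair_cost n m u w j <= N%:Z.
Proof.
elim=> {N u w} [u _ | N u w v /adj_pair_cost [j1 h1] _ [j2 h2]].
  by exists 0; rewrite /pair_cost big1 // => p _; rewrite subrr mul0r subr0 normr0.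
exists (j1 + j2).
apply: (le_trans (y := pair_cost n m u w j1 + pair_cost n m w v j2)); last first.
  by have := lerD h1 h2; rewrite -addn1 PoszD (addrC N%:Z).
rewrite -big_split /=; apply: ler_sum => p _.
set a := psum u p.+1; set b := psum w p.+1; set c := psum v p.+1.
rewrite (_ : a - c - _ = (a - b - j1 * n%:Z) + (b - c - j2 * n%:Z)) ?ler_normD //.
by ring.
Qed.

Lemma psum_extremal n m v j : 0 < diag_cost n m v j ->
  exists p s, [/\ (p <= m)%N, s = 1 \/ s = -1, 0 < s * (psum v p.+1 - j * n%:Z)
    & forall q, (q <= m)%N -> s * psum v q.+1 <= s * psum v p.+1].
Proof.
move=> hc.
have [pM _ hM] := arg_maxP (fun q : 'I_m.+1 => psum v q.+1) (isT : predT ord0).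
have [pm _ hm] := arg_minP (fun q : 'I_m.+1 => psum v q.+1) (isT : predT ord0).
have [ltM | geM] := ltrP (j * n%:Z) (psum v pM.+1).
  exists pM, 1; split; [by rewrite -ltnS | by left | lia |].
  by move=> q hq; rewrite !mul1r; apply: (hM (Ordinal (hq : q < m.+1)%N)).
have [ltm | gem] := ltrP (psum v pm.+1) (j * n%:Z).
  exists pm, (-1); split; [by rewrite -ltnS | by right | lia |].
  by move=> q hq; rewrite !mulN1r lerN2; apply: (hm (Ordinal (hq : q < m.+1)%N)).
suff : diag_cost n m v j = 0 by lia.
apply: big1 => q _; apply/eqP; rewrite normr_eq0 subr_eq0 eq_le.
by rewrite (le_trans (hM q isT)) // (le_trans _ (hm q isT)).
Qed.

Lemma cost_descent n m v j : (1 < n)%N -> is_vertex n m v ->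
  0 < diag_cost n m v j ->
  exists w j', adj n m v w /\ diag_cost n m w j' = diag_cost n m v j - 1.
Proof.
move=> hn hv /psum_extremal [p [s [hp hs hpos hmax]]].
have hsp : (0 < p)%N -> 0 <= s * coord v p.
  move=> p0; have := hmax p.-1 ltac:(lia); rewrite prednK // psumS.
  by case: hs => ->; lia.
have hsp1 : (p < m)%N -> s * coord v p.+1 <= 0.
  by move=> pm; have := hmax p.+1 pm; rewrite (psumS v p.+1); case: hs => ->; lia.
have htr := transfer_move_unit n m v p s.
have [J hJ] := transfer_psum hp htr.
exists (move_unit n m v p s), (j - J); split.
  by apply/adjP; split=> //; [exact: vertex_move_unit | exists p, s].
rewrite [RHS](_ : _ = \sum_(q < m.+1) (`|psum v q.+1 - j * n%:Z| - ((q : nat) == p)%:Z));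
  last by rewrite sumrB sum_indicator_ord.
apply: eq_bigr => -[q hq] _ /=; have := hJ q hq.
have [-> | _] := eqVneq q p; last by move=> ->; lia.
by rewrite /= => E; case: hs hpos E => ->; lia.
Qed.

Lemma diag_cost_eq0 n m v j : (1 < n)%N -> is_vertex n m v ->
  diag_cost n m v j = 0 -> v = zero_vertex m.
Proof.
move=> hn [hsz h0 hm1 _ hdiv] hc.
have hS : forall p, (p <= m)%N -> psum v p.+1 = j * n%:Z.
  move=> p hp; apply/eqP; rewrite -subr_eq0 -normr_eq0; apply/eqP.
  exact: (psumr_eq0P (fun _ _ => normr_ge0 _) hc (i := Ordinal (hp : p < m.+1)%N)).
have hj : j * n%:Z = 0.
  apply: dvdz_small; last by apply/dvdzP; exists j.
  by rewrite -(hS 0%N) // psumS psum0 add0r.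
have hS0 : forall k, (k <= m.+1)%N -> psum v k = 0.
  by case=> [|k] hk; rewrite ?psum0 ?hS.
have hlast : coord v m.+1 = 0.
  rewrite -/(psum v m.+2) in hdiv.
  apply: (dvdz_small (n := n)) => //.
  by rewrite -[coord _ _]add0r -(hS0 m.+1) // -psumS.
apply: (@eq_from_nth _ 0); first by rewrite hsz size_nseq.
move=> i; rewrite hsz => hi; rewrite nth_nseq hi.
have [-> // | him] := eqVneq i m.+1.
by have := psumS v i; rewrite !hS0 ?add0r; [move=> /esym | lia | lia].
Qed.

Lemma walk_of_diag_cost n m N v j : (1 < n)%N -> is_vertex n m v ->
  diag_cost n m v j = N%:Z -> walk n m N v (zero_vertex m).
Proof.
move=> hn; elim: N v j => [|N IH] v j hv hc.
  by rewrite (diag_cost_eq0 hn hv hc); apply: walk0; apply: vertex_zero; lia.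
have hpos : 0 < diag_cost n m v j by rewrite hc.
have [w [j' [hadj hw]]] := cost_descent hn hv hpos.
have hvw : is_vertex n m w by case/adjP: hadj.
by apply: walkS hadj (IH w j' hvw _); rewrite hw hc -addn1 PoszD addrK.
Qed.

Lemma walk_abs_diag_cost n m v j : (1 < n)%N -> is_vertex n m v ->
  walk n m `|diag_cost n m v j|%N v (zero_vertex m).
Proof.
by move=> hn hv; apply: walk_of_diag_cost hn hv _; rewrite gez0_abs ?diag_cost_ge0.
Qed.

Lemma dist_minimal n m u w N : walk n m N u w ->
  walk n m (dist n m u w) u w /\ forall k, walk n m k u w -> (dist n m u w <= k)%N.
Proof.
move=> hw.
pose P k := if excluded_middle_informative (walk n m k u w) then true else false.
have PP k : P k <-> walk n m k u w by rewrite /P; case: excluded_middle_informative.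
have [k /PP hk hmin] := ex_minnP (ex_intro P N (proj2 (PP N) hw)).
have hex : exists k, walk n m k u w /\ forall k', walk n m k' u w -> (k <= k')%N.
  by exists k; split=> // k' /PP; apply: hmin.
exact: (epsilon_spec (inhabits 0%N) _ hex).
Qed.

Lemma dist_le_diag_cost n m v j : (1 < n)%N -> is_vertex n m v ->
  (dist n m v (zero_vertex m))%:Z <= diag_cost n m v j.
Proof.
move=> hn hv; have hw := walk_abs_diag_cost j hn hv.
by rewrite -(gez0_abs (diag_cost_ge0 n m v j)) lez_nat; apply: (dist_minimal hw).2 _ hw.
Qed.

Lemma diag_cost_le_dist n m v : (1 < n)%N -> is_vertex n m v ->
  exists j, diag_cost n m v j <= (dist n m v (zero_vertex m))%:Z.
Proof.
move=> hn hv; have [hw _] := dist_minimal (walk_abs_diag_cost 0 hn hv).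
have [j hj] := walk_pair_cost hw.
by exists j; rewrite -pair_cost_zero.
Qed.

(** * Costs around a window between two pivots *)

Definition seg_dist (a b p : int) : int := Num.max 0 (Num.max (a - p) (p - b)).

Definition window_cost_bound n m R : int :=
  \sum_(p < m.+1) (n%:Z + 2 * seg_dist R%:Z (m%:Z - R%:Z) p%:Z).

Section PivotWindow.

Variables (n m : nat) (v : seq int) (Kl Kr : nat) (k : int).
Hypotheses (hn : (1 < n)%N) (hv : is_vertex n m v).
Hypotheses (hKlr : (Kl < Kr)%N) (hKr : (Kr <= m.+2)%N).
Hypotheses (hKl_piv : psum v Kl = k * n%:Z) (hKr_piv : psum v Kr = k * n%:Z + n%:Z).
Hypothesis hno_piv : forall i, (Kl < i < Kr)%N -> ~~ (n%:Z %| psum v i)%Z.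

Let psum_up i : (0 < i <= m)%N -> psum v i.+1 <= psum v i + 1.
Proof. by move=> hi; have := vertex_psum_step hv hi; lia. Qed.

Lemma psum_gt_pivot i : (Kl < i < Kr)%N -> k * n%:Z < psum v i.
Proof.
move=> hi; rewrite ltNge; apply/negP => hle.
have [_ _ hm1 hmid _] := hv.
have hlast : k * n%:Z <= psum v Kr.-1.
  have := psumS v Kr.-1; rewrite prednK ?hKr_piv; last by lia.
  have [hKm | hKm] := leqP Kr.-1 m; first by have := hmid Kr.-1 ltac:(lia); lia.
  by rewrite (_ : Kr.-1 = m.+1); lia.
have [x hx hSx] := @unit_steps_ivt (psum v) i Kr.-1 (k * n%:Z) ltac:(lia)
  (fun x hx => @psum_up x ltac:(lia)) hle hlast.
by move: (@hno_piv x ltac:(lia)); rewrite hSx dvdz_mull.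
Qed.

Lemma psum_lt_pivot i : (Kl < i < Kr)%N -> psum v i < k * n%:Z + n%:Z.
Proof.
move=> hi; rewrite ltNge; apply/negP => hge.
have [_ h0 _ hmid _] := hv.
have hfirst : psum v Kl.+1 <= k * n%:Z + n%:Z.
  rewrite psumS hKl_piv.
  have [hK0 | hK0] := eqVneq Kl 0%N; first by rewrite hK0; lia.
  by have := hmid Kl ltac:(lia); lia.
have [x hx hSx] := @unit_steps_ivt (psum v) Kl.+1 i (k * n%:Z + n%:Z) ltac:(lia)
  (fun x hx => @psum_up x ltac:(lia)) hfirst hge.
move: (@hno_piv x ltac:(lia)); rewrite hSx -[X in _ + X]mul1r -mulrDl.
by rewrite dvdz_mull.
Qed.

Lemma window_cost_le R : (Kl <= R.+1)%N -> (m < R + Kr)%N ->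
  diag_cost n m v k + diag_cost n m v (k + 1) <= window_cost_bound n m R.
Proof.
move=> hKlR hKrR; rewrite /diag_cost -big_split; apply: ler_sum => -[p hp] _ /=.
rewrite /seg_dist.
have [hpl | hpl] := leqP p.+1 Kl.
  by have := psum_lipschitz hv (ltn0Sn p) hpl ltac:(lia); lia.
have [hpr | hpr] := leqP Kr p.+1.
  by have := psum_lipschitz hv (_ : 0 < Kr)%N hpr ltac:(lia); lia.
have := psum_gt_pivot (i := p.+1) ltac:(lia).
by have := psum_lt_pivot (i := p.+1) ltac:(lia); lia.
Qed.

End PivotWindow.

(** * The vertices u^(0) and u^(1) *)

Lemma coord_u0_mid n m i : (0 < i <= m)%N -> coord (u_0 n m) i = 1.
Proof.
case: i => // i /andP [_ hi].
by rewrite /Defs.coord /u_0 /= nth_cat size_nseq hi nth_nseq hi.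
Qed.

Lemma coord_u0_last n m : coord (u_0 n m) m.+1 = ((- m%:Z - u0_first n m) %% n%:Z)%Z.
Proof. by rewrite /Defs.coord /u_0 /= nth_cat size_nseq ltnn subnn. Qed.

Lemma psum_u0 n m p : (p <= m)%N -> psum (u_0 n m) p.+1 = u0_first n m + p%:Z.
Proof.
elim: p => [|p IH] hp; first by rewrite psumS psum0 add0r addr0.
by rewrite psumS IH ?coord_u0_mid; lia.
Qed.

Lemma vertex_u0 n m : (1 < n)%N -> is_vertex n m (u_0 n m).
Proof.
move=> hn; have hn0 : (0 < n)%N by lia.
have [_ [_ hr1]] := modz_decomp (- ((m - n) %/ 2)%N%:Z) hn0.
have [q2 [hq2 hr2]] := modz_decomp (- m%:Z - u0_first n m) hn0.
split=> //.
- by rewrite /u_0 /= size_cat size_nseq addn1.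
- by rewrite coord_u0_last.
- by move=> i /coord_u0_mid ->.
- rewrite -/(psum (u_0 n m) m.+2) psumS psum_u0 // coord_u0_last hq2.
  by apply/dvdzP; exists (- q2); lia.
Qed.

Definition u1_zero_index (m : nat) : nat := (m.+1)./2 + odd m.+1.

Lemma u1_zero_index_bounds m : (1 < m)%N -> (0 < u1_zero_index m <= m)%N.
Proof. by rewrite /u1_zero_index; case: odd (odd_double_half m.+1) => /=; lia. Qed.

Lemma coord_u1_mid n m i : (0 < i <= m)%N ->
  coord (u_1 n m) i = (i != u1_zero_index m)%:Z.
Proof.
case: i => // i /andP [_ hi].
rewrite /Defs.coord /u_1 /= nth_cat size_map size_iota hi.
by rewrite (nth_map 0%N) ?size_iota // nth_iota // add1n; case: eqP.
Qed.

Lemma coord_u1_last n m :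
  coord (u_1 n m) m.+1 = ((- (m%:Z - 1) - u0_first n m) %% n%:Z)%Z.
Proof. by rewrite /Defs.coord /u_1 /= nth_cat size_map size_iota ltnn subnn. Qed.

Lemma psum_u1 n m p : (p <= m)%N ->
  psum (u_1 n m) p.+1 = u0_first n m + p%:Z - (u1_zero_index m <= p)%N%:Z.
Proof.
have hc : (0 < u1_zero_index m)%N.
  by rewrite /u1_zero_index; case: odd (odd_double_half m.+1) => /=; lia.
elim: p => [|p IH] hp.
  by rewrite psumS psum0 add0r leqNgt hc /Defs.coord /=; lia.
by rewrite psumS IH ?coord_u1_mid; lia.
Qed.

Lemma vertex_u1 n m : (1 < n)%N -> (1 < m)%N -> is_vertex n m (u_1 n m).
Proof.
move=> hn hm; have hn0 : (0 < n)%N by lia.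
have [_ [_ hr1]] := modz_decomp (- ((m - n) %/ 2)%N%:Z) hn0.
have [q2 [hq2 hr2]] := modz_decomp (- (m%:Z - 1) - u0_first n m) hn0.
split=> //.
- by rewrite /u_1 /= size_cat size_map size_iota addn1.
- by rewrite coord_u1_last.
- by move=> i /coord_u1_mid ->; case: (_ != _).
- rewrite -/(psum (u_1 n m) m.+2) psumS psum_u1 // coord_u1_last hq2.
  have /andP [_ ->] := u1_zero_index_bounds hm.
  by apply/dvdzP; exists (- q2); lia.
Qed.

Lemma seg_dist_shift (a b p : int) : seg_dist a b p = seg_dist 0 (b - a) (p - a).
Proof. by rewrite /seg_dist; congr (Num.max 0 (Num.max _ _)); ring. Qed.

Lemma seg_pair_le_abs (n : nat) (x W : int) : W <= 0 \/ n%:Z <= W ->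
  n%:Z + 2 * seg_dist 0 n%:Z x <= `|x - W| + `|n%:Z - x - W|.
Proof. by rewrite /seg_dist; case=> ?; lia. Qed.

Lemma window_bound_le_u0 n m R j : (1 < n)%N -> m = (R + R + n)%N ->
  window_cost_bound n m R <= 2 * diag_cost n m (u_0 n m) j.
Proof.
move=> hn hm; have [q [hq _]] := modz_decomp (- R%:Z) (ltnW hn).
rewrite /diag_cost (double_sum_rev m (fun p => `|psum (u_0 n m) p.+1 - j * n%:Z|)).
apply: ler_sum => -[p hp] _ /=.
rewrite !psum_u0 ?leq_subr // /u0_first (_ : ((m - n) %/ 2)%N = R) ?hq; last by lia.
rewrite seg_dist_shift (_ : m%:Z - R%:Z - R%:Z = n%:Z); last by lia.
set W := (j + q) * n%:Z.
rewrite [X in `|X| + _](_ : _ = p%:Z - R%:Z - W); last by rewrite /W; lia.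
rewrite [X in _ + `|X|](_ : _ = n%:Z - (p%:Z - R%:Z) - W); last first.
  by rewrite /W; lia.
exact/seg_pair_le_abs/mulz_le0_or_ge.
Qed.

Lemma u1_zero_indexE n m R :
  m = (R + R + n + 1)%N -> u1_zero_index m = (R + 1 + (n./2 + odd n))%N.
Proof.
move=> hm; rewrite /u1_zero_index (_ : odd m.+1 = odd n).
  by have := odd_double_half m.+1; have := odd_double_half n; case: (odd n) => /=; lia.
by rewrite hm (_ : _.+1 = n + (R.+1).*2)%N ?oddD ?odd_double ?addbF //; lia.
Qed.

(* The summand of [window_bound_le_u1] for the pair p, m - p, in the coordinate
   x = p - R and with n = 2 h + o: b1 and b2 are the drops of the prefix sums
   of u^(1) at p and m - p, and b3 = [p = u1_zero_index m - 1] carries the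
   extra unit of the bound. *)
Lemma u1_pair_bound (n h o x W b1 b2 b3 : int) :
  n = 2 * h + o -> (o = 0 \/ o = 1) -> 2 <= n -> (W <= 0 \/ n <= W) ->
  (b1 = 1 /\ h + o < x \/ b1 = 0 /\ x <= h + o) ->
  (b2 = 1 /\ x <= h \/ b2 = 0 /\ h < x) ->
  (b3 = 1 /\ x = h + o \/ b3 = 0 /\ x <> h + o) ->
  n + 2 * seg_dist 0 (n + 1) x <= `|x - b1 - W| + `|n + 1 - x - b2 - W| + b3.
Proof.
move=> hn ho hn2 hW h1 h2 h3; rewrite /seg_dist.
by case: h1 => [[-> ?]|[-> ?]]; case: h2 => [[-> ?]|[-> ?]];
  case: h3 => [[-> ?]|[-> ?]]; case: hW => ?; lia.
Qed.

Lemma window_bound_le_u1 n m R j : (1 < n)%N -> m = (R + R + n + 1)%N ->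
  window_cost_bound n m R <= 2 * diag_cost n m (u_1 n m) j + 1.
Proof.
move=> hn hm; have [q [hq _]] := modz_decomp (- R%:Z) (ltnW hn).
have hc := u1_zero_indexE hm; have hc1 : ((u1_zero_index m).-1 <= m)%N by lia.
rewrite /diag_cost (double_sum_rev m (fun p => `|psum (u_1 n m) p.+1 - j * n%:Z|)).
rewrite -[X in _ + X](sum_indicator_ord hc1) -big_split /=.
apply: ler_sum => -[p hp] _ /=.
rewrite !psum_u1 ?leq_subr // /u0_first (_ : ((m - n) %/ 2)%N = R) ?hq; last by lia.
rewrite seg_dist_shift (_ : m%:Z - R%:Z - R%:Z = n%:Z + 1); last by lia.
set W := (j + q) * n%:Z; set b1 := (u1_zero_index m <= p)%N%:Z.
set b2 := (u1_zero_index m <= m - p)%N%:Z; set b3 := (p == (u1_zero_index m).-1)%:Z.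
rewrite [X in `|X| + _](_ : _ = p%:Z - R%:Z - b1 - W); last by rewrite /W; lia.
rewrite [X in _ + `|X| + _](_ : _ = n%:Z + 1 - (p%:Z - R%:Z) - b2 - W); last first.
  by rewrite /W; lia.
have hh := odd_double_half n.
apply: (u1_pair_bound (h := (n./2)%N%:Z) (o := (odd n)%N%:Z)).
- by lia.
- by case: odd; [right | left].
- by lia.
- exact: mulz_le0_or_ge.
- by rewrite /b1; case: leqP => ?; [left | right]; lia.
- by rewrite /b2; case: leqP => ?; [left | right]; lia.
- by rewrite /b3; case: eqVneq => ?; [left | right]; lia.
Qed.

(** * Pivots *)

Lemma piv_psum n m v (k : nat) : (k < m.+3)%N ->
  piv n m v (k%:Z - 1) = (n%:Z %| psum v k)%Z.
Proof.
move=> hk; rewrite /piv subrK absz_nat.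
by rewrite (_ : (-1 <= k%:Z - 1 <= m.+1%:Z) = true) //; apply/andP; split; lia.
Qed.

Lemma p_lP n m v : exists Kl : nat,
  [/\ p_l n m v = Kl%:Z - 1, (Kl < m.+3)%N, (n%:Z %| psum v Kl)%Z,
      (Kl%:Z - 1) * 2 < m%:Z &
      forall k, (k < m.+3)%N -> (n%:Z %| psum v k)%Z ->
        (k%:Z - 1) * 2 < m%:Z -> (k <= Kl)%N].
Proof.
set P := fun k : 'I_m.+3 => piv n m v (k%:Z - 1) && ((k%:Z - 1) * 2 < m%:Z).
have P0 : P ord0 by rewrite /P piv_psum // psum0 dvdz0; apply/andP; split=> //; lia.
rewrite /p_l (bigmax_eq_arg _ _ _ _ P0) //; case: arg_maxP => // K /andP [].
rewrite piv_psum // => hK hKm hmax; exists K; split=> // k hk hkd hkm.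
by apply: (hmax (Ordinal hk)); rewrite /P piv_psum // hkd hkm.
Qed.

Lemma p_rP n m v : is_vertex n m v -> exists Kr : nat,
  [/\ p_r n m v = Kr%:Z - 1, (Kr < m.+3)%N, (n%:Z %| psum v Kr)%Z,
      m%:Z <= (Kr%:Z - 1) * 2 &
      forall k, (k < m.+3)%N -> (n%:Z %| psum v k)%Z ->
        m%:Z <= (k%:Z - 1) * 2 -> (Kr <= k)%N].
Proof.
move=> [_ _ _ _ hdiv].
set P := fun k : 'I_m.+3 => piv n m v (k%:Z - 1) && (m%:Z <= (k%:Z - 1) * 2).
have Pmax : P ord_max.
  by rewrite /P piv_psum //; apply/andP; split; [exact: hdiv | rewrite /=; lia].
rewrite /p_r (bigmin_eq_arg _ _ _ _ Pmax); last by move=> i _; exact: leq_ord.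
case: arg_minP => // K /andP [].
rewrite piv_psum // => hK hKm hmin; exists K; split=> // k hk hkd hkm.
by apply: (hmin (Ordinal hk)); rewrite /P piv_psum // hkd hkm.
Qed.

Lemma sum_Ic_psum n m v (Kl Kr : nat) :
  p_l n m v = Kl%:Z - 1 -> p_r n m v = Kr%:Z - 1 -> (Kl <= Kr <= m.+2)%N ->
  sum_Ic n m v = psum v Kr - psum v Kl.
Proof.
move=> hl hr /andP [hlr hrm]; rewrite -sum_psum // big_geq_mkord.
rewrite (big_ord_widen_cond _ _ _ hrm) /sum_Ic hl hr; apply: eq_bigl => i /=.
by apply/idP/idP => /andP [h1 h2]; apply/andP; split; lia.
Qed.

Lemma half_le_dist_int (H : nat) (x : int) (m : nat) :
  (H%:R / 2 : rat) <= `|x%:~R - m%:R / 2| -> H%:Z <= `|x * 2 - m%:Z|.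
Proof.
move=> h; rewrite -(ler_int rat) intr_norm.
have -> : ((x * 2 - m%:Z)%:~R : rat) = (x%:~R - m%:R / 2) * 2.
  by rewrite intrB intrM; field.
by rewrite normrM (ger0_norm (_ : 0 <= 2)) // -ler_pdivrMr.
Qed.

Lemma pivot_far n m v (H k : nat) : h_ge n m v (H%:R / 2) -> (k < m.+3)%N ->
  (n%:Z %| psum v k)%Z -> H%:Z <= `|(k%:Z - 1) * 2 - m%:Z|.
Proof.
by move=> hh hk hd; apply: half_le_dist_int; apply: hh; rewrite piv_psum.
Qed.

Lemma pivot_window_cost n m v : (1 < n)%N -> (n <= m)%N -> is_vertex n m v ->
  h_ge n m v (h_nm n m) -> sum_Ic n m v = n%:Z ->
  exists R k, m = (R + R + (if ~~ odd (m - n) then n else n.+1))%N /\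
    diag_cost n m v k + diag_cost n m v (k + 1) <= window_cost_bound n m R.
Proof.
move=> hn hnm hv hh hsum; set H := if ~~ odd (m - n) then n else n.+1.
have {}hh : h_ge n m v (H%:R / 2) by rewrite /H; move: hh; rewrite /h_nm; case: ifP.
have [R hR] : exists R, m = (R + R + H)%N.
  exists ((m - n)./2); have := odd_double_half (m - n).
  by rewrite /H; case: odd => /=; lia.
have [Kl [hl hKl hdl hKlm maxl]] := p_lP n m v.
have [Kr [hr hKr hdr hKrm minr]] := p_rP hv.
have hKlR : (Kl <= R.+1)%N by have := pivot_far hh hKl hdl; lia.
have hKrR : (R + H < Kr)%N by have := pivot_far hh hKr hdr; lia.
have [k hk] := dvdzP hdl.
have hS : psum v Kr = k * n%:Z + n%:Z.
  by move: hsum; rewrite (sum_Ic_psum hl hr) ?hk; lia.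
exists R, k; split=> //; apply: (window_cost_le hn hv _ _ hk hS) => //; try lia.
move=> i hi; apply/negP => hdi.
have [him | him] := ltrP ((i%:Z - 1) * 2) m%:Z.
  by have := maxl i ltac:(lia) hdi him; lia.
by have := minr i ltac:(lia) hdi him; lia.
Qed.

Theorem lemma5p27 (n m : nat) (v : seq int) :
  (1 < n)%N -> (n <= m)%N ->
  is_vertex n m v ->
  h_ge n m v (h_nm n m) ->
  sum_Ic n m v = n%:Z ->
  (exists k, walk n m k v (zero_vertex m)) /\
  (dist n m v (zero_vertex m) <= D_nm n m)%N.
Proof.
move=> hn hnm hv hh hsum.
split; first by eexists; apply: (walk_abs_diag_cost 0 hn hv).
have [R [k [hR hk]]] := pivot_window_cost hn hnm hv hh hsum.
have hd0 := dist_le_diag_cost k hn hv; have hd1 := dist_le_diag_cost (k + 1) hn hv.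
rewrite /D_nm; case: ifP => hodd; rewrite hodd in hR.
  have [j hj] := diag_cost_le_dist hn (vertex_u0 m hn).
  by have := window_bound_le_u0 j hn hR; lia.
have hR1 : m = (R + R + n + 1)%N by lia.
have hm1 : (1 < m)%N by lia.
have [j hj] := diag_cost_le_dist hn (vertex_u1 hn hm1).
by have := window_bound_le_u1 j hn hR1; lia.
Qed.
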